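(* Let $\mathbb{C}$ be a regular category. If the Pairwise Chinese Remainder Theorem holds in $\mathbb{C}$, then $\mathbb{C}$ has finite 2-fold subobject decompositions.
   Context: A category is regular if it has finite limits and coequalizers of kernel pairs and regular epimorphisms are pullback-stable; the image of a subobject under a morphism is given by regular epi–mono factorization. For $w:S\to W$ and subobject $A$ of $W$, $w\in_S A$ means $w$ factors through a representative of $A$. For an equivalence relation $\theta$ on $X$ and $a,b:S\to X$, $a\equiv b\bmod\theta$ means $(a,b)\in_S\theta$. An equivalence relation is effective if it is the kernel pair of some morphism. Given $a_1,\dots,a_m:S\to X$ and equivalence relations $\theta_1,\dots,\theta_m$ on $X$, the system $x\equiv a_i\bmod\theta_i$ ($i=1,\dots,m$) is approximately solvable if there are a regular epimorphism $\alpha:Q\to S$ and a morphism $a:Q\to X$ with $a\equiv a_i\alpha\bmod\theta_i$ for all $i$; it is approximately pairwise solvable if for all $i,j$ the two-equation subsystem for $i,j$ is approximately solvable. The Pairwise Chinese Remainder Theorem holds in $\mathbb{C}$ if for every object $X$, every $m$, all $a_1,\dots,a_m:S\to X$ and all effective equivalence relations $\theta_1,\dots,\theta_m$ on $X$, approximate pairwise solvability implies approximate solvability. $\mathbb{C}$ has finite 2-fold subobject decompositions if for every positive integer $n$, all objects $A_1,\dots,A_n$ and all subobjects $S,T$ of $A_1\times\cdots\times A_n$: if for all $i,j\in\{1,\dots,n\}$ the images of $S$ and $T$ under $(\pi_i,\pi_j):A_1\times\cdots\times A_n\to A_i\times A_j$ coincide, then $S=T$. *)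

From mathcomp Require Import ssreflect ssrfun ssrbool eqtype ssrnat fintype.

Set Implicit Arguments.
Unset Strict Implicit.
Unset Printing Implicit Defensive.

Record Cat := {
  Obj :> Type;
  Hom : Obj -> Obj -> Type;
  idm : forall A, Hom A A;
  comp : forall A B D, Hom B D -> Hom A B -> Hom A D;
  comp_id_l : forall A B (f : Hom A B), comp (idm B) f = f;
  comp_id_r : forall A B (f : Hom A B), comp f (idm A) = f;
  comp_assoc : forall A B D E (f : Hom D E) (g : Hom B D) (h : Hom A B),
      comp f (comp g h) = comp (comp f g) h
}.

Arguments Hom {c} _ _.
Arguments idm {c} _.
Arguments comp {c A B D} _ _.
Notation "g \oc f" := (comp g f) (at level 40, left associativity).

Section CatDefs.
Variable C : Cat.

Definition mono {A B : C} (f : Hom A B) : Prop :=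
  forall Z (g h : Hom Z A), f \oc g = f \oc h -> g = h.

Definition is_terminal (T : C) : Prop :=
  forall A : C, exists f : Hom A T, forall g : Hom A T, g = f.

Definition is_binprod (A B P : C) (p1 : Hom P A) (p2 : Hom P B) : Prop :=
  forall Z (f : Hom Z A) (g : Hom Z B), exists h : Hom Z P,
    p1 \oc h = f /\ p2 \oc h = g /\
    forall h' : Hom Z P, p1 \oc h' = f -> p2 \oc h' = g -> h' = h.

Definition is_prod (n : nat) (A : 'I_n -> C) (P : C)
    (pi : forall i, Hom P (A i)) : Prop :=
  forall Z (f : forall i, Hom Z (A i)), exists h : Hom Z P,
    (forall i, pi i \oc h = f i) /\
    forall h' : Hom Z P, (forall i, pi i \oc h' = f i) -> h' = h.

Definition is_equalizer (A B E : C) (f g : Hom A B) (e : Hom E A) : Prop :=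
  f \oc e = g \oc e /\
  forall Z (k : Hom Z A), f \oc k = g \oc k ->
    exists u : Hom Z E, e \oc u = k /\
      forall u' : Hom Z E, e \oc u' = k -> u' = u.

Definition is_coequalizer (A B Q : C) (f g : Hom A B) (q : Hom B Q) : Prop :=
  q \oc f = q \oc g /\
  forall Z (k : Hom B Z), k \oc f = k \oc g ->
    exists u : Hom Q Z, u \oc q = k /\
      forall u' : Hom Q Z, u' \oc q = k -> u' = u.

Definition is_pullback (A B D P : C) (f : Hom A D) (g : Hom B D)
    (p1 : Hom P A) (p2 : Hom P B) : Prop :=
  f \oc p1 = g \oc p2 /\
  forall Z (x : Hom Z A) (y : Hom Z B), f \oc x = g \oc y ->
    exists u : Hom Z P, p1 \oc u = x /\ p2 \oc u = y /\
      forall u' : Hom Z P, p1 \oc u' = x -> p2 \oc u' = y -> u' = u.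

Definition regular_epi (A B : C) (e : Hom A B) : Prop :=
  exists (R : C) (f g : Hom R A), is_coequalizer f g e.

Definition has_finite_limits : Prop :=
  (exists T : C, is_terminal T) /\
  (forall A B : C, exists P (p1 : Hom P A) (p2 : Hom P B), is_binprod p1 p2) /\
  (forall (A B : C) (f g : Hom A B), exists E (e : Hom E A), is_equalizer f g e).

Definition regular_category : Prop :=
  has_finite_limits /\
  (forall (A B P : C) (f : Hom A B) (p1 p2 : Hom P A),
      is_pullback f f p1 p2 -> exists Q (q : Hom A Q), is_coequalizer p1 p2 q) /\
  (forall (A B D P : C) (e : Hom A B) (g : Hom D B) (p1 : Hom P A) (p2 : Hom P D),
      regular_epi e -> is_pullback e g p1 p2 -> regular_epi p2).

Record subobj (X : C) := Subobj {
  sub_dom : C;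
  sub_mor : Hom sub_dom X;
  sub_mono : mono sub_mor
}.

Definition sub_le (X : C) (S T : subobj X) : Prop :=
  exists u : Hom (sub_dom S) (sub_dom T), sub_mor T \oc u = sub_mor S.

Definition sub_eq (X : C) (S T : subobj X) : Prop := sub_le S T /\ sub_le T S.

Definition is_image (X Y : C) (f : Hom X Y) (S : subobj X) (I : subobj Y) : Prop :=
  exists e : Hom (sub_dom S) (sub_dom I),
    regular_epi e /\ sub_mor I \oc e = f \oc sub_mor S.

(** * Relations on X as (jointly monic) spans, i.e. subobjects of X x X *)
Record relation (X : C) := Relation {
  rel_dom : C;
  rel1 : Hom rel_dom X;
  rel2 : Hom rel_dom X;
  rel_jmono : forall Z (g h : Hom Z rel_dom),
      rel1 \oc g = rel1 \oc h -> rel2 \oc g = rel2 \oc h -> g = h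
}.

(** [a == b mod theta] for generalized elements [a b : S -> X],
    i.e. [(a,b) \in_S theta] *)
Definition congr_mod (X S : C) (theta : relation X) (a b : Hom S X) : Prop :=
  exists u : Hom S (rel_dom theta), rel1 theta \oc u = a /\ rel2 theta \oc u = b.

Definition equivalence_relation (X : C) (theta : relation X) : Prop :=
  (forall S (a : Hom S X), congr_mod theta a a) /\
  (forall S (a b : Hom S X), congr_mod theta a b -> congr_mod theta b a) /\
  (forall S (a b c : Hom S X),
      congr_mod theta a b -> congr_mod theta b c -> congr_mod theta a c).

Definition effective_eqrel (X : C) (theta : relation X) : Prop :=
  equivalence_relation theta /\
  exists (Y : C) (f : Hom X Y), is_pullback f f (rel1 theta) (rel2 theta).

Definition approx_solvable_on (X S : C) (m : nat) (K : 'I_m -> Prop)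
    (a : 'I_m -> Hom S X) (theta : 'I_m -> relation X) : Prop :=
  exists (Q : C) (alpha : Hom Q S) (x : Hom Q X),
    regular_epi alpha /\ forall k, K k -> congr_mod (theta k) x (a k \oc alpha).

Definition approx_solvable (X S : C) (m : nat)
    (a : 'I_m -> Hom S X) (theta : 'I_m -> relation X) : Prop :=
  approx_solvable_on (fun _ => True) a theta.

Definition approx_pairwise_solvable (X S : C) (m : nat)
    (a : 'I_m -> Hom S X) (theta : 'I_m -> relation X) : Prop :=
  forall i j : 'I_m, approx_solvable_on (fun k => k = i \/ k = j) a theta.

Definition pairwise_CRT : Prop :=
  forall (X S : C) (m : nat), 0 < m ->
  forall (a : 'I_m -> Hom S X) (theta : 'I_m -> relation X),
    (forall k, effective_eqrel (theta k)) ->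
    approx_pairwise_solvable a theta -> approx_solvable a theta.

Definition finite_2fold_subobject_decompositions : Prop :=
  forall (n : nat), 0 < n ->
  forall (A : 'I_n -> C) (P : C) (pi : forall i, Hom P (A i)),
    @is_prod n A P pi ->
  forall S T : subobj P,
    (forall (i j : 'I_n) (Q : C) (q1 : Hom Q (A i)) (q2 : Hom Q (A j)),
        is_binprod q1 q2 ->
        forall h : Hom P Q, q1 \oc h = pi i -> q2 \oc h = pi j ->
        exists IS IT : subobj Q, is_image h S IS /\ is_image h T IT /\ sub_eq IS IT) ->
    sub_eq S T.

End CatDefs.

(* Write m_S, m_T for the monos representing S, T.  To see that S <= T it
   suffices to find a cover p : W -> S and x : W -> T with m_T x = m_S p.
   Comparing the images of S and T in each A_i x A_j yields such data agreeing
   on the coordinates i and j only, after a regular epi onto S.  Pulling back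
   along one another, the regular epis for the single coordinates k share a
   cover p : W -> S carrying maps t_k : W -> T that agree with m_S p on
   coordinate k.  The system x = t_k mod ker(pi_k m_T) is then approximately
   pairwise solvable, so the pairwise CRT solves it on a regular epi Q -> W;
   the solution agrees with m_S p on every coordinate, hence everywhere. *)
From mathcomp Require Import ssreflect ssrfun ssrbool eqtype ssrnat fintype.
From Stdlib Require Import ClassicalEpsilon.

Set Implicit Arguments.
Unset Strict Implicit.

Section Covers.
Variable C : Cat.

(* Weaker than being a regular epi, but evidently closed under composition. *)
Definition cover (W S : C) (p : Hom W S) : Prop :=
  forall (M Y : C) (m : Hom M Y), mono m ->
  forall (y : Hom S Y) (x : Hom W M), m \oc x = y \oc p ->
  exists v : Hom S M, m \oc v = y.

Lemma regular_epi_epi (A B : C) (e : Hom A B) :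
  regular_epi e -> forall Z (u v : Hom B Z), u \oc e = v \oc e -> u = v.
Proof.
move=> [R [f [g [efg univ]]]] Z u v uv.
have ufg : (u \oc e) \oc f = (u \oc e) \oc g by rewrite -!comp_assoc efg.
have [w [_ w_uniq]] := univ Z _ ufg.
by rewrite (w_uniq u erefl) (w_uniq v (esym uv)).
Qed.

Lemma regular_epi_cover (W S : C) (p : Hom W S) : regular_epi p -> cover p.
Proof.
move=> p_reg; have p_epi := regular_epi_epi p_reg.
move: p_reg => [R [f [g [pfg univ]]]] M Y m m_mono y x mxyp.
have xfg : x \oc f = x \oc g.
  by apply: m_mono; rewrite !comp_assoc mxyp -!comp_assoc pfg.
have [v [vpx _]] := univ M x xfg.
by exists v; apply: p_epi; rewrite -comp_assoc vpx.
Qed.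

Lemma cover_id (S : C) : cover (idm S).
Proof. by move=> M Y m _ y x; rewrite comp_id_r => <-; exists x. Qed.

Lemma cover_comp (V W S : C) (p : Hom W S) (q : Hom V W) :
  cover p -> cover q -> cover (p \oc q).
Proof.
move=> p_cov q_cov M Y m m_mono y x mx.
have [v mv] := q_cov M Y m m_mono (y \oc p) x (etrans mx (comp_assoc _ _ _)).
exact: p_cov mv.
Qed.

Lemma cover_sub_le (X W : C) (S T : subobj X) (p : Hom W (sub_dom S))
    (x : Hom W (sub_dom T)) :
  cover p -> sub_mor T \oc x = sub_mor S \oc p -> sub_le S T.
Proof. by move=> p_cov; apply: p_cov; apply: sub_mono. Qed.

End Covers.

Section Limits.
Variable C : Cat.

Lemma prod_jointly_monic (n : nat) (A : 'I_n -> C) (P : C)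
    (pi : forall i, Hom P (A i)) :
  is_prod pi -> forall Z (g h : Hom Z P), (forall i, pi i \oc g = pi i \oc h) -> g = h.
Proof.
move=> prodP Z g h gh.
have [u [_ u_uniq]] := prodP Z (fun i => pi i \oc h).
by rewrite (u_uniq g gh) (u_uniq h (fun i => erefl)).
Qed.

Hypothesis limC : has_finite_limits C.

Lemma pullback_exists (A B D : C) (f : Hom A D) (g : Hom B D) :
  exists P (p1 : Hom P A) (p2 : Hom P B), is_pullback f g p1 p2.
Proof.
have [_ [prodC eqC]] := limC.
have [P0 [q1 [q2 prodP0]]] := prodC A B.
have [E [e [fe univ]]] := eqC _ _ (f \oc q1) (g \oc q2).
exists E, (q1 \oc e), (q2 \oc e); split; first by rewrite !comp_assoc.
move=> Z x y fxgy.
have [h [q1h [q2h h_uniq]]] := prodP0 Z x y.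
have fgh : (f \oc q1) \oc h = (g \oc q2) \oc h by rewrite -!comp_assoc q1h q2h.
have [u [eu u_uniq]] := univ Z h fgh.
exists u; rewrite -!comp_assoc eu; split=> //; split=> // u' q1u' q2u'.
by apply: u_uniq; apply: h_uniq; rewrite comp_assoc.
Qed.

Lemma kernel_pair_exists (X Y : C) (f : Hom X Y) :
  exists th : relation X, is_pullback f f (rel1 th) (rel2 th).
Proof.
have [K [r1 [r2 [fr univ]]]] := pullback_exists f f.
have r_jmono : forall Z (g h : Hom Z K),
    r1 \oc g = r1 \oc h -> r2 \oc g = r2 \oc h -> g = h.
  move=> Z g h r1gh r2gh.
  have frg : f \oc (r1 \oc g) = f \oc (r2 \oc g) by rewrite !comp_assoc fr.
  have [u [_ [_ u_uniq]]] := univ Z _ _ frg.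
  by rewrite (u_uniq g erefl erefl) (u_uniq h (esym r1gh) (esym r2gh)).
by exists (Relation r_jmono); split.
Qed.

End Limits.

Section KernelPairs.
Variables (C : Cat) (X Y : C) (f : Hom X Y) (th : relation X).
Hypothesis th_kernel : is_pullback f f (rel1 th) (rel2 th).

Lemma kernel_pair_congr_mod S (a b : Hom S X) : congr_mod th a b <-> f \oc a = f \oc b.
Proof.
case: th_kernel => fr univ; split; first by move=> [u [<- <-]]; rewrite !comp_assoc fr.
by move=> fab; have [u [r1u [r2u _]]] := univ S a b fab; exists u.
Qed.

Lemma kernel_pair_effective : effective_eqrel th.
Proof.
split; last by exists Y, f.
split; first by move=> S a; apply/kernel_pair_congr_mod.
split; first by move=> S a b /kernel_pair_congr_mod fab; apply/kernel_pair_congr_mod.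
by move=> S a b c /kernel_pair_congr_mod fab /kernel_pair_congr_mod fbc;
  apply/kernel_pair_congr_mod; rewrite fab.
Qed.

End KernelPairs.

Section Regular.
Variable C : Cat.
Hypothesis regC : regular_category C.

Lemma pullback_regular_epi (Y W S : C) (f : Hom Y S) (g : Hom W S) :
  regular_epi f -> exists P (p1 : Hom P Y) (p2 : Hom P W),
    regular_epi p2 /\ f \oc p1 = g \oc p2.
Proof.
have [limC [_ stableC]] := regC.
move=> f_reg; have [P [p1 [p2 pb]]] := pullback_exists limC f g.
by exists P, p1, p2; split; [exact: stableC pb | case: pb].
Qed.

Lemma common_refinement (S : C) (n : nat) (Phi : 'I_n -> forall W : C, Hom W S -> Prop) :
  (forall k W W' (h : Hom W' W) (p : Hom W S), Phi k W p -> Phi k W' (p \oc h)) ->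
  (forall k, exists Y (f : Hom Y S), regular_epi f /\ Phi k Y f) ->
  exists W (p : Hom W S), cover p /\ forall k, Phi k W p.
Proof.
move=> Phi_sieve Phi_reg.
suff /(_ n (leqnn n)) [W [p [p_cov Phi_p]]] : forall b, b <= n ->
    exists W (p : Hom W S), cover p /\ forall k : 'I_n, k < b -> Phi k W p.
  by exists W, p; split => // k; apply: Phi_p.
elim=> [_ | b IH lt_b_n]; first by exists S, (idm S); split => //; apply: cover_id.
have [W [p [p_cov Phi_p]]] := IH (ltnW lt_b_n).
have [Y [f [f_reg Phi_f]]] := Phi_reg (Ordinal lt_b_n).
have [P [p1 [p2 [p2_reg fp]]]] := pullback_regular_epi p f_reg.
exists P, (p \oc p2); split; first by apply: cover_comp => //; apply: regular_epi_cover.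
move=> k; rewrite ltnS leq_eqVlt => /orP[/eqP k_b | lt_k_b].
  have -> : k = Ordinal lt_b_n by apply: val_inj.
  by rewrite -fp; apply: Phi_sieve.
exact: Phi_sieve (Phi_p k lt_k_b).
Qed.

Lemma image_le_cover (P Q : C) (h : Hom P Q) (S T : subobj P) (IS IT : subobj Q) :
  is_image h S IS -> is_image h T IT -> sub_le IS IT ->
  exists V (s : Hom V (sub_dom S)) (t : Hom V (sub_dom T)),
    regular_epi s /\ h \oc sub_mor T \oc t = h \oc sub_mor S \oc s.
Proof.
move=> [eS [_ eSS]] [eT [eT_reg eTT]] [w wST].
have [V [p1 [p2 [p2_reg eTp]]]] := pullback_regular_epi (w \oc eS) eT_reg.
exists V, p2, p1; split => //.
by rewrite -eTT -eSS -wST -!comp_assoc eTp -comp_assoc.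
Qed.

End Regular.

Section Decomposition.
Variables (C : Cat) (n : nat) (A : 'I_n -> C) (P : C) (pi : forall i, Hom P (A i)).
Hypotheses (regC : regular_category C) (prodP : is_prod pi).
Variables S T : subobj P.

Definition locally_le_on (K : 'I_n -> Prop) : Prop :=
  exists V (s : Hom V (sub_dom S)) (t : Hom V (sub_dom T)), regular_epi s /\
    forall k, K k -> pi k \oc sub_mor T \oc t = pi k \oc sub_mor S \oc s.

Definition pair_images_le (i j : 'I_n) : Prop :=
  forall (Q : C) (q1 : Hom Q (A i)) (q2 : Hom Q (A j)), is_binprod q1 q2 ->
  forall h : Hom P Q, q1 \oc h = pi i -> q2 \oc h = pi j ->
  exists IS IT : subobj Q, is_image h S IS /\ is_image h T IT /\ sub_le IS IT.

Lemma pair_images_le_locally (i j : 'I_n) :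
  pair_images_le i j -> locally_le_on (fun k => k = i \/ k = j).
Proof.
move=> images_le; have [[_ [prodC _]] _] := regC.
have [Q [q1 [q2 prodQ]]] := prodC (A i) (A j).
have [h [q1h [q2h _]]] := prodQ P (pi i) (pi j).
have [IS [IT [imS [imT le_IS_IT]]]] := images_le Q q1 q2 prodQ h q1h q2h.
have [V [s [t [s_reg hts]]]] := image_le_cover regC imS imT le_IS_IT.
exists V, s, t; split => // k [-> | ->]; [rewrite -q1h | rewrite -q2h];
  by rewrite -!comp_assoc !(comp_assoc h) hts.
Qed.

Section Congruences.
Variable theta : 'I_n -> relation (sub_dom T).
Hypothesis theta_kernel : forall k,
  is_pullback (pi k \oc sub_mor T) (pi k \oc sub_mor T) (rel1 (theta k)) (rel2 (theta k)).

Lemma locally_le_pairwise_solvable (W : C) (p : Hom W (sub_dom S))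
    (t : 'I_n -> Hom W (sub_dom T)) :
  (forall k, pi k \oc sub_mor T \oc t k = pi k \oc sub_mor S \oc p) ->
  (forall i j, locally_le_on (fun k => k = i \/ k = j)) ->
  approx_pairwise_solvable t theta.
Proof.
move=> t_p locally_le i j.
have [V [s [tV [s_reg tV_s]]]] := locally_le i j.
have [Z [z1 [z2 [z2_reg s_p]]]] := pullback_regular_epi regC p s_reg.
exists Z, z2, (tV \oc z1); split => // k k_ij.
apply/(kernel_pair_congr_mod (theta_kernel k)).
by rewrite !comp_assoc t_p tV_s // -!comp_assoc s_p.
Qed.

Lemma approx_solution_sub_le (W Q : C) (p : Hom W (sub_dom S)) (alpha : Hom Q W)
    (t : 'I_n -> Hom W (sub_dom T)) (x : Hom Q (sub_dom T)) :
  cover p -> regular_epi alpha ->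
  (forall k, pi k \oc sub_mor T \oc t k = pi k \oc sub_mor S \oc p) ->
  (forall k, congr_mod (theta k) x (t k \oc alpha)) ->
  sub_le S T.
Proof.
move=> p_cov alpha_reg t_p x_sol.
apply: (cover_sub_le (p := p \oc alpha) (x := x)).
  by apply: cover_comp => //; apply: regular_epi_cover.
apply: (prod_jointly_monic prodP) => k.
have := proj1 (kernel_pair_congr_mod (theta_kernel k) _ _) (x_sol k).
by rewrite !comp_assoc => ->; rewrite t_p.
Qed.

End Congruences.

Lemma pairwise_locally_le_sub_le :
  pairwise_CRT C -> 0 < n ->
  (forall i j, locally_le_on (fun k => k = i \/ k = j)) -> sub_le S T.
Proof.
move=> crt n_gt0 locally_le; have [limC _] := regC.
pose Phi k W (p : Hom W (sub_dom S)) :=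
  exists t : Hom W (sub_dom T), pi k \oc sub_mor T \oc t = pi k \oc sub_mor S \oc p.
have [W [p [p_cov Phi_p]]] : exists W (p : Hom W (sub_dom S)), cover p /\ forall k, Phi k W p.
  apply: common_refinement => // [k W W' h p' [t t_p] | k].
    by exists (t \oc h); rewrite !comp_assoc t_p.
  have [V [s [t [s_reg t_s]]]] := locally_le k k.
  by exists V, s; split => //; exists t; apply: t_s; left.
pose t k := proj1_sig (constructive_indefinite_description _ (Phi_p k)).
have t_p k : pi k \oc sub_mor T \oc t k = pi k \oc sub_mor S \oc p.
  exact: proj2_sig (constructive_indefinite_description _ (Phi_p k)).
pose kernel k := kernel_pair_exists limC (pi k \oc sub_mor T).
pose theta k := proj1_sig (constructive_indefinite_description _ (kernel k)).
have theta_kernel k := proj2_sig (constructive_indefinite_description _ (kernel k)).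
have [Q [alpha [x [alpha_reg x_sol]]]] : approx_solvable t theta.
  apply: crt => // [k | ]; first exact: kernel_pair_effective (theta_kernel k).
  exact: (locally_le_pairwise_solvable theta_kernel t_p locally_le).
exact: (approx_solution_sub_le theta_kernel p_cov alpha_reg t_p (fun k => x_sol k I)).
Qed.

End Decomposition.

Theorem lemma5p5 (C : Cat) :
  regular_category C -> pairwise_CRT C -> finite_2fold_subobject_decompositions C.
Proof.
move=> regC crt n n_gt0 A P pi prodP S T images_eq.
have le_of_images (S1 S2 : subobj P) :
    (forall i j, pair_images_le pi S1 S2 i j) -> sub_le S1 S2.
  move=> images_le.
  apply: (pairwise_locally_le_sub_le (S := S1) (T := S2) regC prodP crt n_gt0) => i j.
  exact: (pair_images_le_locally regC (images_le i j)).
split; apply: le_of_images => i j Q q1 q2 prodQ h q1h q2h;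
  have [IS [IT [imS [imT [le_ST le_TS]]]]] := images_eq i j Q q1 q2 prodQ h q1h q2h.
  by exists IS, IT.
by exists IT, IS.
Qed.
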